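(* Let $G$ be a block graph whose blocks are the cliques $K_{n_1},\dots,K_{n_r}$. Then $G$ admits a weak IASI and its sparing number is $\varphi(G)=\frac{1}{2}\sum_{i=1}^r (n_i-1)(n_i-2)$.
   Context: A block graph (clique tree) is a connected graph in which every block (maximal 2-connected subgraph or bridge) is a clique; here $r$ is the number of these cliques and $n_i$ the order of the $i$-th one. Let $\mathbb{N}_0$ be the set of non-negative integers; for $A,B\subseteq\mathbb{N}_0$, $A+B=\{a+b:a\in A,b\in B\}$. An integer additive set-indexer (IASI) of a graph $G$ is an injective map $f:V(G)\to\mathcal{P}(\mathbb{N}_0)$ such that $f^+:E(G)\to\mathcal{P}(\mathbb{N}_0)$, $f^+(uv)=f(u)+f(v)$, is injective. A weak IASI is an IASI with $|f^+(uv)|=\max(|f(u)|,|f(v)|)$ for every edge $uv$. An edge $e$ is mono-indexed if $|f^+(e)|=1$. The sparing number $\varphi(G)$ is the minimum number of mono-indexed edges over all weak IASIs of $G$. *)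

From HB Require Import structures.
From mathcomp Require Import all_boot.
From mathcomp Require Import finmap.
Set Implicit Arguments. Unset Strict Implicit. Unset Printing Implicit Defensive.
Local Open Scope fset_scope.

(* Simple graphs: T : finType, e : rel T symmetric and irreflexive. *)

Definition restr (T : finType) (e : rel T) (S : {set T}) : rel T :=
  [rel x y | [&& x \in S, y \in S & e x y]].

(* G[S] is connected (the empty vertex set is vacuously connected) *)
Definition induced_connected (T : finType) (e : rel T) (S : {set T}) : bool :=
  [forall x in S, forall y in S, connect (restr e S) x y].

Definition nonseparable (T : finType) (e : rel T) (S : {set T}) : bool :=
  [&& S != set0, induced_connected e S &
      [forall v in S, induced_connected e (S :\ v)]].

Definition is_block (T : finType) (e : rel T) (B : {set T}) : bool :=
  nonseparable e B &&
  [forall S : {set T}, (B \subset S) && nonseparable e S ==> (S == B)].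

Definition is_clique (T : finType) (e : rel T) (B : {set T}) : bool :=
  [forall x in B, forall y in B, (x != y) ==> e x y].

Definition block_graph (T : finType) (e : rel T) : Prop :=
  (forall x y : T, connect e x y) /\
  (forall B : {set T}, is_block e B -> is_clique e B).

Definition sumset (A B : {fset nat}) : {fset nat} :=
  [fset (a + b)%N | a in A, b in B].

Definition IASI (T : finType) (e : rel T) (f : T -> {fset nat}) : Prop :=
  injective f /\
  (forall u v x y, e u v -> e x y ->
     sumset (f u) (f v) = sumset (f x) (f y) -> [set u; v] = [set x; y]).

Definition weak_IASI (T : finType) (e : rel T) (f : T -> {fset nat}) : Prop :=
  IASI e f /\
  (forall u v, e u v -> #|` sumset (f u) (f v)| = maxn #|` f u| #|` f v|).

(* number of mono-indexed edges (edges are unordered pairs {u, v}) *)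
Definition mono_count (T : finType) (e : rel T) (f : T -> {fset nat}) : nat :=
  #|[set [set u; v] | u in T, v in T & e u v && (#|` sumset (f u) (f v)| == 1%N)]|.

Definition is_sparing_number (T : finType) (e : rel T) (k : nat) : Prop :=
  (exists f, weak_IASI e f /\ mono_count e f = k) /\
  (forall f, weak_IASI e f -> (k <= mono_count e f)%N).

From HB Require Import structures.
From mathcomp Require Import all_boot.
From mathcomp Require Import finmap.
From mathcomp Require Import zify.
Set Implicit Arguments. Unset Strict Implicit. Unset Printing Implicit Defensive.

(* Lower bound: in a weak IASI two adjacent vertices cannot both carry
   non-singleton sets (|A + B| > max(|A|, |B|) as soon as both have two
   elements, and injectivity excludes two empty sets).  So a block K_n has at
   least n - 1 singleton-indexed vertices, every edge between two of them is
   mono-indexed, and since every edge lies in exactly one block at least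
   sum_i C(n_i - 1, 2) edges are mono-indexed.
   Upper bound: a block graph has an independent set S meeting every block
   with at least two vertices; it is built greedily along an order of the
   vertices keeping the processed part connected.  Index the vertex of rank k
   by {2^k}, or by {2^k, 2^k + 1} if it lies in S.  Sums of two distinct
   powers of two determine the edge, independence of S makes the indexer
   weak, and the mono-indexed edges are exactly the edges of a block that
   avoid its S-vertex. *)

Section InducedConnectivity.
Variables (T : finType) (e : rel T).

Lemma restr_sym (S : {set T}) : symmetric e -> symmetric (restr e S).
Proof. by move=> e_sym x y; rewrite /restr /= e_sym andbCA. Qed.

Lemma connect_restr1 (S : {set T}) x y :
  x \in S -> y \in S -> e x y -> connect (restr e S) x y.
Proof. by move=> xS yS exy; apply: connect1; rewrite /restr /= xS yS. Qed.

Lemma connect_restr_sub (X Y : {set T}) a b :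
  X \subset Y -> connect (restr e X) a b -> connect (restr e Y) a b.
Proof.
move=> /subsetP XY; apply: connect_sub => x y /and3P [xX yX exy].
exact: connect_restr1 (XY x xX) (XY y yX) exy.
Qed.

Lemma restr_path (X : {set T}) a q :
  a \in X -> path (restr e X) a q -> {subset a :: q <= X} /\ path e a q.
Proof.
elim: q a => [|b q IH] a aX /=; first by split=> // z /[!inE] /eqP ->.
case/andP=> /and3P [_ bX eab] /(IH b bX) [sub pq]; split; last by rewrite eab.
by move=> z /[!inE] /orP [/eqP ->|/sub].
Qed.

Hypothesis e_sym : symmetric e.

Lemma sorted_connect_restr (S : {set T}) (s : seq T) y z :
  sorted e s -> {subset s <= S} -> y \in s -> z \in s ->
  connect (restr e S) y z.
Proof.
case: s => [//|h t] pth sub ys zs.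
have pthS : path (restr e S) h t.
  apply: (sub_in_path (P := [in S])) pth; last by apply/allP=> w /sub.
  by move=> a b aS bS eab; rewrite /restr /= aS bS.
apply: (connect_trans (y := h)); last exact: (path_connect pthS zs).
by rewrite (sym_connect_sym (restr_sym S e_sym)); exact: (path_connect pthS ys).
Qed.

Lemma induced_connected_hub (S : {set T}) h :
  (forall y, y \in S -> connect (restr e S) y h) -> induced_connected e S.
Proof.
move=> toh; apply/forallP=> x; apply/implyP=> xS; apply/forallP=> y; apply/implyP=> yS.
apply: connect_trans (toh x xS) _.
by rewrite (sym_connect_sym (restr_sym S e_sym)); apply: toh.
Qed.

End InducedConnectivity.

Section NonseparableSets.
Variables (T : finType) (e : rel T).
Hypothesis e_sym : symmetric e.

Lemma clique_edge (B : {set T}) x y :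
  is_clique e B -> x \in B -> y \in B -> x != y -> e x y.
Proof.
move=> /forallP/(_ x)/implyP cB xB yB.
by move: (cB xB) => /forallP/(_ y)/implyP/(_ yB)/implyP.
Qed.

Lemma induced_connected_cliqueU (B1 B2 W : {set T}) v :
  is_clique e B1 -> is_clique e B2 -> v \in B1 -> v \in B2 ->
  v \in W -> W \subset B1 :|: B2 -> induced_connected e W.
Proof.
move=> c1 c2 v1 v2 vW /subsetP WU.
apply: (induced_connected_hub e_sym (h := v)) => y yW.
have [->|yv] := eqVneq y v; first exact: connect0.
apply: connect_restr1 => //.
by case/setUP: (WU y yW) => yB; [exact: (clique_edge c1) | exact: (clique_edge c2)].
Qed.

(* Two cliques through v stay connected without v as soon as some edge (or
   common vertex) joins them outside v. *)
Lemma nonseparable_cliqueU (B1 B2 : {set T}) v x x' :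
  is_clique e B1 -> is_clique e B2 -> v \in B1 -> v \in B2 ->
  x \in B1 -> x' \in B2 -> x != v -> x' != v -> (x == x') || e x x' ->
  nonseparable e (B1 :|: B2).
Proof.
move=> c1 c2 v1 v2 x1 x2 xv x'v xx'.
have connU := induced_connected_cliqueU c1 c2 v1 v2.
apply/and3P; split.
- by apply/set0Pn; exists v; rewrite inE v1.
- by apply: connU; [rewrite inE v1 | exact: subxx].
apply/forallP=> w; apply/implyP=> wU.
have [->|wv] := eqVneq w v; last first.
  by apply: connU; [rewrite !inE eq_sym wv v1 | exact: subD1set].
set U := (B1 :|: B2) :\ v.
have xU : x \in U by rewrite !inE xv x1.
have x'U : x' \in U by rewrite !inE x'v x2 orbT.
have x'x : connect (restr e U) x' x.
  case/orP: xx' => [/eqP ->|exx']; first exact: connect0.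
  by apply: connect_restr1; rewrite // e_sym.
apply: (induced_connected_hub e_sym (h := x)) => y.
rewrite /U !inE => /andP [yv /orP [yB|yB]].
  have [->|yx] := eqVneq y x; first exact: connect0.
  by apply: connect_restr1 => //; [rewrite !inE yv yB | exact: (clique_edge c1)].
have [->|yx'] := eqVneq y x'; first exact: x'x.
apply: connect_trans x'x; apply: connect_restr1 => //; last exact: (clique_edge c2).
by rewrite !inE yv yB orbT.
Qed.

Section Cycle.
Variables (v a : T) (q : seq T).
Hypotheses (pth : path e a q) (uq : uniq (a :: q)) (vq : v \notin a :: q).
Hypotheses (eva : e v a) (evb : e v (last a q)).

Let C := v |: [set y | y \in a :: q].

Lemma in_cycle z : (z \in C) = (z == v) || (z \in a :: q).
Proof. by rewrite in_setU1 in_set. Qed.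

(* Deleting a vertex w of the path splits it into a prefix through a and a
   suffix through last a q, both of which are adjacent to v. *)
Lemma cycle_del_connect w y :
  w \in a :: q -> y \in a :: q -> y != w -> connect (restr e (C :\ w)) y v.
Proof.
move=> wq yq yw.
have wv : w != v by apply: contraNneq vq => <-.
have vCw : v \in C :\ w by rewrite in_setD1 eq_sym wv in_cycle eqxx.
have CwP (s : seq T) : {subset s <= a :: q} -> w \notin s -> {subset s <= C :\ w}.
  move=> sq ws z zs; rewrite in_setD1 in_cycle sq ?orbT // andbT.
  by apply: contraNneq ws => <-.
move: pth uq evb; rewrite -/(sorted e (a :: q)) -[last a q]/(last a (a :: q)).
move Es: (a :: q) wq yq => s wq yq srt us evs.
case/splitPr: wq Es yq yw srt us evs => s1 s2 Es yq yw srt us evs.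
move: us; rewrite cat_uniq /= => /and3P [_ /norP [ws1 _] /andP [ws2 _]].
have s1q : {subset s1 <= a :: q} by move=> z zs1; rewrite Es mem_cat zs1.
have s2q : {subset s2 <= a :: q} by move=> z zs2; rewrite Es mem_cat inE zs2 !orbT.
move: yq srt; rewrite mem_cat inE (negbTE yw) /= sorted_cat_cons.
case/orP=> [ys1|ys2] /andP [srt1 srt2].
- case: s1 Es ys1 s1q ws1 srt1 {evs} => [//|h t] [<- _] ys1 s1q ws1.
  rewrite /= rcons_path => /andP [srt1 _].
  have aCw : a \in C :\ w by apply: CwP ws1 _ _; rewrite ?mem_head.
  apply: (connect_trans (y := a)); last by apply: connect_restr1; rewrite // e_sym.
  apply: (sorted_connect_restr e_sym (s := a :: t)) => //; last exact: mem_head.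
  exact: CwP.
- case: s2 ys2 s2q ws2 srt2 evs {Es s1q} => [//|h t] ys2 s2q ws2 srt2.
  rewrite last_cat /= => evs.
  have bs2 : last h t \in h :: t by exact: mem_last.
  have bCw : last h t \in C :\ w by exact: CwP ws2 _ bs2.
  apply: (connect_trans (y := last h t)).
    exact: (sorted_connect_restr e_sym (path_sorted srt2) (CwP _ s2q ws2) ys2 bs2).
  by apply: connect_restr1; rewrite // e_sym.
Qed.

Lemma nonseparable_cycle : nonseparable e C.
Proof.
have vC : v \in C by rewrite in_cycle eqxx.
have qC : {subset a :: q <= C} by move=> y yq; rewrite in_cycle yq orbT.
have to_a (X : {set T}) : {subset a :: q <= X} -> forall y, y \in a :: q ->
    connect (restr e X) y a.
  move=> sub y yq.
  exact: (sorted_connect_restr e_sym (s := a :: q) pth sub yq (mem_head _ _)).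
apply/and3P; split.
- by apply/set0Pn; exists v.
- apply: (induced_connected_hub e_sym (h := v)) => y.
  rewrite in_cycle => /orP [/eqP ->|yq]; first exact: connect0.
  apply: connect_trans (to_a _ qC y yq) _.
  by apply: connect_restr1; [exact: qC (mem_head _ _) | | rewrite e_sym].
apply/forallP=> w; apply/implyP; rewrite in_cycle => /orP [/eqP ->|wq].
  apply: (induced_connected_hub e_sym (h := a)) => y.
  rewrite in_setD1 in_cycle => /andP [yv /orP [/eqP yv'|yq]].
    by rewrite yv' eqxx in yv.
  apply: to_a yq => z zq; rewrite in_setD1 qC // andbT.
  by apply: contraNneq vq => <-.
apply: (induced_connected_hub e_sym (h := v)) => y.
rewrite in_setD1 in_cycle => /andP [yw /orP [/eqP ->|yq]]; first exact: connect0.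
exact: cycle_del_connect.
Qed.

End Cycle.

Lemma nonseparable_sub_block (C : {set T}) :
  nonseparable e C -> exists2 B, is_block e B & C \subset B.
Proof.
move=> nC; pose P (S : {set T}) := (C \subset S) && nonseparable e S.
have PC : P C by rewrite /P subxx nC.
have [B /maxsetP [/andP [CB nB] maxB] _] := maxset_exists PC.
exists B => //; apply/andP; split=> //; apply/forallP=> S; apply/implyP=> /andP [BS nS].
by apply/eqP; apply: maxB => //; rewrite /P (subset_trans CB BS) nS.
Qed.

End NonseparableSets.

Section BlockGraph.
Variables (T : finType) (e : rel T).
Hypotheses (e_sym : symmetric e) (hG : block_graph e).

Lemma block_clique (B : {set T}) : is_block e B -> is_clique e B.
Proof. exact: hG.2. Qed.

Lemma eq_block_linked (B1 B2 : {set T}) v x x' :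
  is_block e B1 -> is_block e B2 -> v \in B1 -> v \in B2 ->
  x \in B1 -> x' \in B2 -> x != v -> x' != v -> (x == x') || e x x' ->
  B1 = B2.
Proof.
move=> b1 b2 v1 v2 x1 x2 xv x'v xx'.
have nU := nonseparable_cliqueU e_sym (block_clique b1) (block_clique b2)
  v1 v2 x1 x2 xv x'v xx'.
move: b1 b2 => /andP [_ /forallP/(_ (B1 :|: B2))] /implyP/(_ _)/eqP E1.
move=> /andP [_ /forallP/(_ (B1 :|: B2))] /implyP/(_ _)/eqP E2.
by rewrite -E1 ?subsetUl ?nU // -[RHS]E2 ?subsetUr ?nU.
Qed.

Lemma eq_block2 (B1 B2 : {set T}) u v :
  is_block e B1 -> is_block e B2 -> u != v ->
  u \in B1 -> v \in B1 -> u \in B2 -> v \in B2 -> B1 = B2.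
Proof.
move=> b1 b2 uv u1 v1 u2 v2.
by apply: (eq_block_linked b1 b2 u1 u2 v1 v2); rewrite 1?eq_sym // eqxx.
Qed.

Lemma edge_in_block u v : irreflexive e -> e u v ->
  exists2 B, is_block e B & (u \in B) && (v \in B).
Proof.
move=> e_irr euv.
have vu : v != u by apply: contraTneq euv => ->; rewrite e_irr.
have cl : is_clique e [set u; v].
  apply/forallP=> a; apply/implyP=> aS; apply/forallP=> b; apply/implyP=> bS.
  apply/implyP; move: aS bS; rewrite !inE => /orP [] /eqP -> /orP [] /eqP ->;
    by rewrite ?eqxx // e_sym.
have := nonseparable_cliqueU e_sym cl cl (v := u) (x := v) (x' := v).
rewrite !inE !eqxx orbT setUid => /(_ isT isT isT isT vu vu isT).
case/nonseparable_sub_block => B bB /subsetP uvB.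
by exists B; rewrite // !uvB // !inE eqxx ?orbT.
Qed.

Lemma edge_unique_block u v : irreflexive e -> e u v ->
  exists2 B, is_block e B &
    forall B', is_block e B' -> ([set u; v] \subset B') = (B == B').
Proof.
move=> e_irr euv; have [B bB /andP [uB vB]] := edge_in_block e_irr euv.
have uv : u != v by apply: contraTneq euv => <-; rewrite e_irr.
exists B => // B' bB'; rewrite subUset !sub1set.
apply/andP/eqP => [[uB' vB']|<-]; last by [].
exact: eq_block2 bB bB' uv uB vB uB' vB'.
Qed.

(* A shortest path from a to b inside X closes, through v, to a cycle; the
   block containing that cycle is a clique. *)
Lemma common_neighbours_adj (X : {set T}) v a b :
  v \notin X -> a \in X -> connect (restr e X) a b ->
  e v a -> e v b -> a != b -> e a b.
Proof.
move=> vX aX /connectP [p pth ->] eva evb ab.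
case: (shortenP pth) ab evb => q pq uq _ ab evb.
have [sub pe] := restr_path aX pq.
have vq : v \notin a :: q by apply: contra vX => /sub.
have [B bB /subsetP CB] :=
  nonseparable_sub_block (nonseparable_cycle e_sym pe uq vq eva evb).
apply: (clique_edge (block_clique bB)) ab; apply: CB; rewrite in_setU1 in_set.
  by rewrite mem_head orbT.
by rewrite mem_last orbT.
Qed.

End BlockGraph.

Definition independent (T : finType) (e : rel T) (S : {set T}) : Prop :=
  forall x y, x \in S -> y \in S -> ~~ e x y.

Definition transversal_on (T : finType) (e : rel T) (X S : {set T}) : Prop :=
  [/\ S \subset X, independent e S,
      (forall a b, a \in X -> b \in X -> connect (restr e X) a b) &
      (forall B, is_block e B -> 1 < #|B :&: X| -> exists2 s, s \in S & s \in B)].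

Section Transversal.
Variables (T : finType) (e : rel T).
Hypotheses (e_sym : symmetric e) (e_irr : irreflexive e) (hG : block_graph e).

Lemma exists_exit_vertex (X : {set T}) r p :
  r \in X -> path e r p -> last r p \notin X ->
  exists2 v, v \notin X & [exists x in X, e v x].
Proof.
elim: p r => [|z p IH] r rX /=; first by rewrite rX.
case/andP=> erz pz lz; have [zX|zX] := boolP (z \in X); first exact: IH zX pz lz.
by exists z => //; apply/existsP; exists r; rewrite rX e_sym.
Qed.

Lemma exists_neighbour_outside (X : {set T}) : #|X| < #|T| ->
  exists2 v, v \notin X & (X == set0) || [exists x in X, e v x].
Proof.
move=> ltXT; have [y yX] : exists y, y \notin X.
  apply/existsP; apply: contraTT ltXT => /existsPn allX; rewrite -leqNgt.
  by apply: subset_leq_card; apply/subsetP=> z _; move: (allX z); rewrite negbK.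
have [->|/set0Pn [r rX]] := eqVneq X set0; first by exists y; rewrite ?inE ?eqxx.
have /connectP [p pth yE] := hG.1 r y.
have [v vX vadj] := exists_exit_vertex rX pth (ltac:(by rewrite -yE)).
by exists v; rewrite ?vadj ?orbT.
Qed.

Section Extend.
Variables (X S : {set T}) (v : T).
Hypotheses (SX : S \subset X) (S_ind : independent e S).
Hypotheses (X_conn : forall a b, a \in X -> b \in X -> connect (restr e X) a b).
Hypothesis (S_hit : forall B, is_block e B -> 1 < #|B :&: X| ->
  exists2 s, s \in S & s \in B).
Hypotheses (vX : v \notin X) (v_adj : (X == set0) || [exists x in X, e v x]).

Let S' := if [exists u in S, e v u] then S else v |: S.

Lemma subset_extend : S \subset S'.
Proof. by rewrite /S'; case: ifP => _; rewrite ?subxx ?subsetU1. Qed.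

Lemma independent_extend : independent e S'.
Proof.
rewrite /S'; case: ifPn => [_|/existsPn nE]; first exact: S_ind.
move=> x y; rewrite !in_setU1 => /orP [/eqP ->|xS] /orP [/eqP ->|yS].
- by rewrite e_irr.
- by move: (nE y); rewrite yS.
- by rewrite e_sym; move: (nE x); rewrite xS.
- exact: S_ind.
Qed.

Lemma connect_extend a b : a \in v |: X -> b \in v |: X ->
  connect (restr e (v |: X)) a b.
Proof.
have toX c : c \in X -> connect (restr e (v |: X)) v c.
  move=> cX; move: v_adj; have /negbTE -> : X != set0 by apply/set0Pn; exists c.
  case/existsP=> x /andP [xX evx]; apply: (connect_trans (y := x)).
    by apply: connect_restr1; rewrite ?in_setU1 ?eqxx ?xX ?orbT.
  exact: connect_restr_sub (subsetU1 _ _) (X_conn xX cX).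
have csym := sym_connect_sym (restr_sym (v |: X) e_sym).
rewrite !in_setU1 => /orP [/eqP ->|aX] /orP [/eqP ->|bX].
- exact: connect0.
- exact: toX.
- by rewrite csym; exact: toX.
- exact: connect_restr_sub (subsetU1 _ _) (X_conn aX bX).
Qed.

(* A block B through v meeting X in a single vertex x: if v has a neighbour
   u in S, then x and u are common neighbours of v joined inside X, hence
   equal or adjacent, which forces the block of the edge vu to be B. *)
Lemma hit_extend B : is_block e B -> 1 < #|B :&: (v |: X)| ->
  exists2 s, s \in S' & s \in B.
Proof.
move=> bB; have [vB|vB] := boolP (v \in B); last first.
  have -> : B :&: (v |: X) = B :&: X.
    by apply/setP=> z; rewrite !inE; case: eqP => // ->; rewrite (negbTE vB).
  by case/(S_hit bB) => s sS sB; exists s => //; apply: (subsetP subset_extend).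
have [BX1|BX1] := ltnP 1 #|B :&: X|.
  by have [s sS sB] := S_hit bB BX1; exists s => //; apply: (subsetP subset_extend).
have -> : B :&: (v |: X) = v |: (B :&: X).
  by apply/setP=> z; rewrite !inE; case: eqP => // ->; rewrite vB.
rewrite cardsU1 => BvX.
have [x /setIP [xB xX]] : exists x, x \in B :&: X.
  by apply/set0Pn; rewrite -card_gt0; move: BvX; case: (_ \notin _) => /=; lia.
have xv : x != v by apply: contraNneq vX => <-.
rewrite /S'; case: ifPn => [/existsP [u /andP [uS evu]]|_]; last first.
  by exists v; rewrite ?in_setU1 ?eqxx.
exists u => //.
have [B' bB' /andP [vB' uB']] := edge_in_block e_sym e_irr evu.
have uX : u \in X := subsetP SX u uS.
have uv : u != v by apply: contraNneq vX => <-.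
have xu : (x == u) || e x u.
  have [//|xu /=] := eqVneq x u.
  apply: (common_neighbours_adj e_sym hG vX xX (X_conn xX uX)) => //.
  by apply: (clique_edge (block_clique hG bB)); rewrite // eq_sym.
by rewrite (eq_block_linked e_sym hG bB bB' vB vB' xB uB' xv uv xu).
Qed.

Lemma transversal_extend : exists S' : {set T}, transversal_on e (v |: X) S'.
Proof.
exists S'; split;
  [|exact: independent_extend | exact: connect_extend | exact: hit_extend].
by rewrite /S'; case: ifP => _; [exact: subset_trans SX (subsetU1 _ _) | exact: setUS].
Qed.

End Extend.

Lemma transversal_grow n : n <= #|T| ->
  exists X S : {set T}, #|X| = n /\ transversal_on e X S.
Proof.
elim: n => [|n IH] le_nT.
  exists set0, set0; split; first by rewrite cards0.
  split=> [|x y|a b|B _]; rewrite ?sub0set ?inE //.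
  by rewrite setI0 cards0.
have [X [S [cardX [SX S_ind X_conn S_hit]]]] := IH (ltnW le_nT).
have [v vX v_adj] := exists_neighbour_outside (X := X) (ltac:(by rewrite cardX)).
have [S' vXS'] := transversal_extend SX S_ind X_conn S_hit vX v_adj.
by exists (v |: X), S'; rewrite cardsU1 vX cardX.
Qed.

Lemma exists_block_transversal : exists S : {set T}, independent e S /\
  (forall B, is_block e B -> 1 < #|B| -> exists2 s, s \in S & s \in B).
Proof.
have [X [S [cardX [_ S_ind _ S_hit]]]] := transversal_grow (leqnn #|T|).
have XT : X = setT by apply/eqP; rewrite eqEcard subsetT cardsT cardX leqnn.
by exists S; split=> // B bB B1; apply: S_hit; rewrite // XT setIT.
Qed.

End Transversal.

Local Open Scope fset_scope.

Lemma sumsetP (A B : {fset nat}) z :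
  reflect (exists a b, [/\ a \in A, b \in B & z = (a + b)%N]) (z \in sumset A B).
Proof.
apply: (iffP (imfset2P _ _ _ _ _)) => [[a aA [b bB ->]]|[a [b [aA bB ->]]]].
  by exists a, b.
by exists a => //; exists b.
Qed.

Lemma sumsetC (A B : {fset nat}) : sumset A B = sumset B A.
Proof.
by apply/fsetP=> z; apply/sumsetP/sumsetP => -[a [b [aA bB ->]]];
  exists b, a; rewrite addnC.
Qed.

Lemma sumset0 (B : {fset nat}) : sumset fset0 B = fset0.
Proof. by apply/fsetP=> z; rewrite inE; apply/sumsetP => -[a [b [/[!inE]]]]. Qed.

Lemma sumsetSr (A B B' : {fset nat}) : B `<=` B' -> sumset A B `<=` sumset A B'.
Proof.
move=> /fsubsetP BB'; apply/fsubsetP=> z /sumsetP [a [b [aA bB ->]]].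
by apply/sumsetP; exists a, b; rewrite aA BB'.
Qed.

Lemma card_sumset1 (A : {fset nat}) b : #|` sumset A [fset b]| = #|` A|.
Proof.
have -> : sumset A [fset b] = [fset (a + b)%N | a in A].
  apply/fsetP=> z; apply/sumsetP/imfsetP.
  - by case=> a [b' [aA /[!inE] /eqP -> ->]]; exists a.
  - by case=> a aA ->; exists a, b; rewrite inE eqxx.
by apply/eqP/card_in_imfsetP => x y _ _ /eqP; rewrite eqn_add2r => /eqP.
Qed.

Lemma fset_max (A : {fset nat}) : 0 < #|` A| ->
  exists2 m, m \in A & forall a, a \in A -> a <= m.
Proof.
rewrite cardfs_gt0 => /fset0Pn A_ne.
have ub a : a \in A -> a <= \max_(x <- A) x by move=> aA; exact: leq_bigmax_seq.
by case: (@ex_maxnP [pred x | x \in A] _ A_ne ub) => m mA max_m; exists m.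
Qed.

(* The #|A| sums a + b, for a fixed b < max B, all lie below max A + max B. *)
Lemma card_sumset_gt (A B : {fset nat}) :
  0 < #|` A| -> 1 < #|` B| -> #|` A| < #|` sumset A B|.
Proof.
move=> A_gt0 B_gt1.
have [m mA max_m] := fset_max A_gt0.
have [mB mBB max_mB] := fset_max (ltnW B_gt1).
have [b /[!inE] /andP [bmB bB]] : exists b, b \in B `\ mB.
  by apply/fset0Pn; rewrite -cardfs_gt0; move: B_gt1; rewrite (cardfsD1 mB B) mBB; lia.
have lt_bmB : b < mB by rewrite ltn_neqAle bmB max_mB.
have sub : (m + mB)%N |` sumset A [fset b] `<=` sumset A B.
  rewrite fsubUset fsub1set sumsetSr ?fsub1set // andbT.
  by apply/sumsetP; exists m, mB.
have notin : (m + mB)%N \notin sumset A [fset b].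
  apply/sumsetP => -[a [b' [aA /[!inE] /eqP -> E]]].
  by have := max_m a aA; lia.
by have := fsubset_leq_card sub; rewrite cardfsU1 notin card_sumset1.
Qed.

Lemma logn2_expn_sum i j : i < j -> logn 2 (2 ^ i + 2 ^ j) = i.
Proof.
move=> lt_ij; have -> : (2 ^ i + 2 ^ j = 2 ^ i * (1 + 2 ^ (j - i)))%N.
  by rewrite mulnDr muln1 -expnD subnKC // ltnW.
rewrite lognM ?expn_gt0 // pfactorK // logn_coprime ?addn0 //.
by rewrite coprime2n oddD oddX subn_eq0 leqNgt lt_ij.
Qed.

Lemma expn2_sum_inj i j k l : i < j -> k < l ->
  (2 ^ i + 2 ^ j = 2 ^ k + 2 ^ l)%N -> i = k /\ j = l.
Proof.
move=> lt_ij lt_kl E.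
have ik : i = k by rewrite -(logn2_expn_sum lt_ij) E logn2_expn_sum.
by split=> //; apply: (@expnI 2) => //; apply/eqP; rewrite -(eqn_add2l (2 ^ i)) E ik.
Qed.

Lemma expn2_sum_eq i j k l : i != j -> k != l ->
  (2 ^ i + 2 ^ j = 2 ^ k + 2 ^ l)%N -> (i = k /\ j = l) \/ (i = l /\ j = k).
Proof.
have swap a b : (2 ^ a + 2 ^ b = 2 ^ b + 2 ^ a)%N by rewrite addnC.
case: ltngtP => // lt_ij _; case: ltngtP => // lt_kl _ E.
- by left; exact: expn2_sum_inj.
- by right; apply: expn2_sum_inj; rewrite // E swap.
- by right; case: (expn2_sum_inj lt_ij lt_kl); rewrite // swap E.
- by left; case: (expn2_sum_inj lt_ij lt_kl); rewrite // swap E swap.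
Qed.

Section Indexer.
Variables (T : finType) (S : {set T}).

(* Distinct powers of two: the sum of the labels of the ends of an edge
   determines the edge. *)
Definition label (v : T) : nat := 2 ^ enum_rank v.

Definition indexer (v : T) : {fset nat} :=
  if v \in S then [fset label v; (label v).+1] else [fset label v].

Lemma enum_rank_val_inj (u v : T) : (enum_rank u : nat) = enum_rank v -> u = v.
Proof. by move/val_inj/enum_rank_inj. Qed.

Lemma label_inj : injective label.
Proof. by move=> u v /(@expnI 2 isT); apply: enum_rank_val_inj. Qed.

Lemma label_in_indexer v : label v \in indexer v.
Proof. by rewrite /indexer; case: ifP => _; rewrite !inE eqxx. Qed.

Lemma indexer_ge v z : z \in indexer v -> label v <= z.
Proof.
by rewrite /indexer; case: ifP => _; rewrite !inE; [case/orP=> /eqP -> | move/eqP ->].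
Qed.

Lemma card_indexer v : #|` indexer v| = (v \in S).+1.
Proof.
by rewrite /indexer; case: ifP => _; rewrite ?cardfs2 ?cardfs1 // (ltn_eqF (ltnSn _)).
Qed.

Lemma sumset_indexer_ge u v z :
  z \in sumset (indexer u) (indexer v) -> (label u + label v)%N <= z.
Proof. by case/sumsetP=> a [b [/indexer_ge ? /indexer_ge ? ->]]; apply: leq_add. Qed.

Lemma label_sum_in u v : (label u + label v)%N \in sumset (indexer u) (indexer v).
Proof. by apply/sumsetP; exists (label u), (label v); rewrite !label_in_indexer. Qed.

Variable (e : rel T).
Hypotheses (e_irr : irreflexive e) (S_ind : independent e S).

Lemma indexer_weak u v : e u v ->
  #|` sumset (indexer u) (indexer v)| = maxn #|` indexer u| #|` indexer v|.
Proof.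
have one_out a b : a \notin S ->
    #|` sumset (indexer b) (indexer a)| = maxn #|` indexer b| #|` indexer a|.
  move=> aS; have -> : indexer a = [fset label a] by rewrite /indexer (negbTE aS).
  by rewrite card_sumset1 cardfs1 card_indexer; apply/esym/maxn_idPl.
move=> euv; case: (boolP (v \in S)) => vS; last exact: one_out.
case: (boolP (u \in S)) => uS; first by move: (S_ind uS vS); rewrite euv.
by rewrite sumsetC maxnC; exact: one_out.
Qed.

Lemma indexer_weak_IASI : weak_IASI e indexer.
Proof.
split; last exact: indexer_weak.
split=> [u v E|u v x y euv exy E].
  have le_uv : label u <= label v by apply: indexer_ge; rewrite E label_in_indexer.
  have le_vu : label v <= label u by apply: indexer_ge; rewrite -E label_in_indexer.
  by apply: label_inj; apply/eqP; rewrite eqn_leq le_uv le_vu.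
have Esum : (label u + label v = label x + label y)%N.
  apply/eqP; rewrite eqn_leq.
  by rewrite sumset_indexer_ge ?E ?label_sum_in // sumset_indexer_ge -?E ?label_sum_in.
have rank_neq a b : e a b -> (enum_rank a : nat) != enum_rank b.
  by move=> eab; apply: contraTneq eab => /enum_rank_val_inj ->; rewrite e_irr.
case: (expn2_sum_eq (rank_neq _ _ euv) (rank_neq _ _ exy) Esum).
  by case=> /enum_rank_val_inj -> /enum_rank_val_inj ->.
by case=> /enum_rank_val_inj -> /enum_rank_val_inj ->; exact: setUC.
Qed.

End Indexer.

Definition mono_edges (T : finType) (e : rel T) (f : T -> {fset nat}) : {set {set T}} :=
  [set [set u; v] | u in T, v in T & e u v && (#|` sumset (f u) (f v)| == 1%N)].

Definition single_indexed (T : finType) (f : T -> {fset nat}) (B : {set T}) : {set T} :=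
  [set x in B | #|` f x| == 1%N].

Section WeakIASI.
Variables (T : finType) (e : rel T) (f : T -> {fset nat}).
Hypothesis wf : weak_IASI e f.

Lemma weak_IASI_edge_card1 u v : e u v -> u != v ->
  (#|` f u| == 1%N) || (#|` f v| == 1%N).
Proof.
move: wf => [[f_inj _] f_weak] euv uv; apply: contraT => /norP [fu1 fv1].
have W := f_weak u v euv.
have [/cardfs0_eq fu0|fu_gt0] := posnP #|` f u|.
  move: W; rewrite fu0 sumset0 cardfs0 max0n => /esym/cardfs0_eq fv0.
  by move: uv; rewrite (f_inj u v) ?eqxx // fu0 fv0.
have [/cardfs0_eq fv0|fv_gt0] := posnP #|` f v|.
  by move: W; rewrite fv0 sumsetC sumset0 cardfs0 maxn0; lia.
have [le_vu|lt_uv] := leqP #|` f v| #|` f u|.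
  by have := card_sumset_gt fu_gt0 (ltac:(lia) : 1 < #|` f v|); rewrite W; lia.
by have := card_sumset_gt fv_gt0 (ltac:(lia) : 1 < #|` f u|); rewrite sumsetC W; lia.
Qed.

Lemma mono_edge_card1 u v : e u v -> #|` sumset (f u) (f v)| = 1%N ->
  #|` f u| = 1%N /\ #|` f v| = 1%N.
Proof.
move=> euv mono; have := wf.2 u v euv; rewrite mono => /esym max1.
have [/cardfs0_eq fu0|?] := posnP #|` f u|; first by move: mono; rewrite fu0 sumset0.
have [/cardfs0_eq fv0|?] := posnP #|` f v|.
  by move: mono; rewrite fv0 sumsetC sumset0.
by lia.
Qed.

Lemma card_single_indexed (B : {set T}) :
  is_clique e B -> #|B| - 1 <= #|single_indexed f B|.
Proof.
move=> cB; have : #|B :\: [set x | #|` f x| == 1%N]| <= 1.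
  rewrite leqNgt; apply/negP => /card_gt1P [x [y [+ + xy]]].
  rewrite !inE => /andP [fx1 xB] /andP [fy1 yB].
  have := weak_IASI_edge_card1 (clique_edge cB xB yB xy) xy.
  by rewrite (negbTE fx1) (negbTE fy1).
by have := cardsID [set x | #|` f x| == 1%N] B; rewrite /single_indexed setIdE; lia.
Qed.

Hypothesis e_irr : irreflexive e.

Lemma card_mono_edges_clique (B : {set T}) : is_clique e B ->
  #|[set A in mono_edges e f | A \subset B]| = 'C(#|single_indexed f B|, 2).
Proof.
move=> cB; rewrite -cards_draws; apply: eq_card => A; rewrite !inE.
apply/andP/andP => [[/imset2P [u v _ /[!inE] /andP [_ /andP [euv /eqP mono]] ->] uvB]|].
  have uv : u != v by apply: contraTneq euv => <-; rewrite e_irr.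
  have [fu fv] := mono_edge_card1 euv mono.
  rewrite cards2 uv; split=> //; apply/subsetP=> z /[!inE] /orP [] /eqP ->;
    by rewrite ?fu ?fv eqxx andbT; apply: (subsetP uvB); rewrite !inE eqxx ?orbT.
case=> sub /cards2P [x [y [xy EA]]]; rewrite EA in sub *.
have /[!inE] /andP [xB /eqP fx] : x \in single_indexed f B.
  by apply: (subsetP sub); rewrite !inE eqxx.
have /[!inE] /andP [yB /eqP fy] : y \in single_indexed f B.
  by apply: (subsetP sub); rewrite !inE eqxx orbT.
split; last by rewrite subUset !sub1set xB yB.
have exy := clique_edge cB xB yB xy.
by apply/imset2P; exists x y; rewrite // inE exy (wf.2 x y exy) fx fy.
Qed.

End WeakIASI.

Lemma mono_count_blocks (T : finType) (e : rel T) (f : T -> {fset nat}) :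
  symmetric e -> irreflexive e -> block_graph e -> weak_IASI e f ->
  mono_count e f = \sum_(B : {set T} | is_block e B) 'C(#|single_indexed f B|, 2).
Proof.
move=> e_sym e_irr hG wf.
pose blk (A : {set T}) := odflt setT [pick B | is_block e B && (A \subset B)].
have blkP A : A \in mono_edges e f -> is_block e (blk A) /\
    forall B, is_block e B -> (A \subset B) = (blk A == B).
  case/imset2P => u v _ /[!inE] /andP [_ /andP [euv _]] ->.
  have [B0 bB0 B0_uniq] := edge_unique_block e_sym hG e_irr euv.
  rewrite /blk; case: pickP => [B /andP [bB]|none]; last first.
    by move: (none B0); rewrite bB0 B0_uniq // eqxx.
  by rewrite B0_uniq // => /eqP <-.
have -> : mono_count e f = \sum_(A in mono_edges e f) 1 by rewrite sum1_card.
rewrite (partition_big blk (is_block e)); last by move=> A /blkP [].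
apply: eq_bigr => B bB.
rewrite -(card_mono_edges_clique wf e_irr (block_clique hG bB)) -sum1_card.
apply: eq_bigl => A; rewrite !inE; case: (boolP (A \in mono_edges e f)) => //= AE.
by have [_ ->] := blkP A AE.
Qed.

Local Close Scope fset_scope.

Lemma single_indexed_indexer (T : finType) (S B : {set T}) :
  single_indexed (indexer S) B = B :\: S.
Proof. by apply/setP=> x; rewrite !inE card_indexer eqSS eqb0 andbC. Qed.

Lemma sum_bin2 (I : Type) (r : seq I) (P : pred I) (F : I -> nat) :
  \sum_(i <- r | P i) 'C(F i, 2) = (\sum_(i <- r | P i) F i * (F i).-1) %/ 2.
Proof.
have E i : F i * (F i).-1 = 'C(F i, 2) * 2.
  by rewrite -[X in _ * X]bin1 mul_bin_diag mulnC.
by rewrite (eq_bigr _ (fun i _ => E i)) -big_distrl mulnK.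
Qed.

Theorem theorem2p12 (T : finType) (e : rel T)
  (e_sym : symmetric e) (e_irr : irreflexive e)
  (hG : block_graph e) :
  (exists f : T -> {fset nat}, weak_IASI e f) /\
  is_sparing_number e
    ((\sum_(B : {set T} | is_block e B) (#|B| - 1) * (#|B| - 2)) %/ 2).
Proof.
have [S [S_ind S_hit]] := exists_block_transversal e_sym e_irr hG.
have wfS := indexer_weak_IASI e_irr S_ind.
have -> : (\sum_(B : {set T} | is_block e B) (#|B| - 1) * (#|B| - 2)) %/ 2 =
    \sum_(B : {set T} | is_block e B) 'C(#|B| - 1, 2).
  by rewrite sum_bin2; congr (_ %/ 2); apply: eq_bigr => B _; congr (_ * _); lia.
have lower g : weak_IASI e g ->
    \sum_(B : {set T} | is_block e B) 'C(#|B| - 1, 2) <= mono_count e g.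
  move=> wg; rewrite (mono_count_blocks e_sym e_irr hG wg); apply: leq_sum => B bB.
  exact/leq_bin2l/card_single_indexed/(block_clique hG bB).
have upper : mono_count e (indexer S) <=
    \sum_(B : {set T} | is_block e B) 'C(#|B| - 1, 2).
  rewrite (mono_count_blocks e_sym e_irr hG wfS); apply: leq_sum => B bB.
  rewrite single_indexed_indexer; have [B_gt1|B_le1] := ltnP 1 #|B|.
    have [s sS sB] := S_hit B bB B_gt1; apply: leq_bin2l.
    by rewrite (cardsD1 s B) sB /= subSS subn0 subset_leq_card // setDSS ?sub1set.
  by rewrite bin_small // (leq_ltn_trans (subset_leq_card (subsetDl B S))).
split; first by exists (indexer S).
split; last exact: lower.
by exists (indexer S); split=> //; apply/eqP; rewrite eqn_leq upper lower.
Qed.
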